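(* Let $k=\mathbb F_{2^f}$ and let $\rho=(R,V,\beta,\Phi)$ be the form ring defined below. A code $C\le k^N$ is of Type $\rho$ if and only if $C$ is a generalized doubly-even self-dual code, i.e. $C$ is a $k$-linear subspace with $C=\{x\in k^N:\sum_i x_ic_i=0\ \forall c\in C\}$ and, for every $c\in C$, $\sum_{i=1}^N c_i=0$ and $\sum_{1\le i<j\le N}c_ic_j=0$.
   Context: $R=V=\mathbb F_{2^f}$ (so codes are $k$-linear subspaces of $k^N$). $\beta(x,y):=\tfrac12\mathrm{tr}(xy)\in\tfrac12\mathbb Z/\mathbb Z$, where $\mathrm{tr}$ is the trace $\mathbb F_{2^f}\to\mathbb F_2\cong\mathbb Z/2\mathbb Z$. Let $O=\mathbb Z_2[\zeta_{2^f-1}]$ be the ring of integers of the unramified extension of degree $f$ of $\mathbb Q_2$, so $R\cong O/2O$; for $x\in R$ the square $x^2$ of any lift of $x$ is well defined in $O/4O$, and the trace $\mathrm{Tr}:O\to\mathbb Z_2$ maps $4O$ into $4\mathbb Z_2$. For $a\in R$ let $\phi_a:V\to\tfrac14\mathbb Z/\mathbb Z$, $\phi_a(x):=\tfrac14\mathrm{Tr}(a^2x^2)$, and $\Phi=\{\phi_a:a\in R\}$. A code of Type $\rho$ is a subspace $C\le k^N$ that is self-dual, i.e. $C=\{x:\sum_i\beta(x_i,c_i)=0\ \forall c\in C\}$, and isotropic, i.e. $\sum_i\phi(c_i)=0$ in $\mathbb Q/\mathbb Z$ for all $c\in C$ and $\phi\in\Phi$. *)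

From HB Require Import structures.
From mathcomp Require Import all_boot all_order all_algebra.
Set Implicit Arguments. Unset Strict Implicit. Unset Printing Implicit Defensive.
Import Order.TTheory GRing.Theory Num.Theory.
Local Open Scope ring_scope.

(* Reduction of Z/4Z into a ring (of characteristic 2): z |-> (z mod 2). *)
Definition toR (R : nzRingType) (z : 'Z_4) : R := (val z)%:R.

Section FormRing.
Variables (f N : nat) (F : finFieldType).

(* absolute trace F_{2^f} -> F_2, with F_2 identified with the prime subfield {0,1} of F *)
Definition abs_tr (x : F) : F := \sum_(i < f) x ^+ (2 ^ i).

(* O/4O = GR(4,f) presented as (Z/4Z)[X]/(p), p a monic lift of an irreducible
   polynomial of degree f over F_2; alpha in F a root of p mod 2, so that
   F = F_2(alpha) = O/2O. *)
Variables (p : {poly 'Z_4}) (alpha : F).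

(* reduction O/4O -> O/2O = F *)
Definition proj (q : {poly 'Z_4}) : F := (map_poly (@toR F) q).[alpha].

(* Tr : O/4O -> Z/4Z, trace of multiplication by q in the basis 1, X, ..., X^(f-1) *)
Definition Tr4 (q : {poly 'Z_4}) : 'Z_4 :=
  \sum_(i < f) (Pdiv.Ring.rmodp (q * 'X^i) p)`_i.

(* beta-self-duality: C = {x : sum_i beta(x_i, c_i) = 0 for all c in C},
   beta(x,y) = 1/2 tr(xy) in 1/2 Z/Z, represented by tr(xy) in F_2 *)
Definition beta_self_dual (C : {vspace 'rV[F]_N}) : Prop :=
  forall x : 'rV[F]_N,
    x \in C <-> (forall c, c \in C -> \sum_(i < N) abs_tr (x 0 i * c 0 i) = 0).

(* isotropy: sum_i phi_a(c_i) = 0 in Q/Z for all c in C, a in R, where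
   phi_a(x) = 1/4 Tr(a^2 x^2) in 1/4 Z/Z, represented by Tr(a^2 x^2) in Z/4Z,
   computed with (arbitrary) lifts of a and of the x = c_i. *)
Definition phi_isotropic (C : {vspace 'rV[F]_N}) : Prop :=
  forall c, c \in C -> forall (a : F) (la : {poly 'Z_4}), proj la = a ->
    forall lc : 'I_N -> {poly 'Z_4}, (forall i, proj (lc i) = c 0 i) ->
      \sum_(i < N) Tr4 (la ^+ 2 * (lc i) ^+ 2) = 0.

Definition type_rho (C : {vspace 'rV[F]_N}) : Prop :=
  beta_self_dual C /\ phi_isotropic C.

End FormRing.

Definition gen_doubly_even_self_dual (N : nat) (F : finFieldType)
    (C : {vspace 'rV[F]_N}) : Prop :=
  (forall x : 'rV[F]_N,
     x \in C <-> (forall c, c \in C -> \sum_(i < N) x 0 i * c 0 i = 0)) /\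
  (forall c, c \in C ->
     \sum_(i < N) c 0 i = 0 /\
     \sum_(i < N) \sum_(j < N | (i < j)%N) c 0 i * c 0 j = 0).

(* Reduction mod 2 maps the trace Tr of O/4O onto the absolute trace tr of F:
   the roots of p mod 2 are the conjugates alpha^(2^i), and the trace of
   multiplication by y on a quotient K[X]/(Q) with Q split and separable is the
   sum of the values of y at the roots of Q.  Since the trace form of F is
   nondegenerate, beta-self-duality is ordinary self-duality.  For c in such a
   code, (sum_i c_i)^2 = sum_i c_i^2 = 0, so lifts x_i of the c_i add up to an
   element of 2O; then (sum_i x_i)^2 is in 4O and
   sum_i x_i^2 = -2 sum_(i<j) x_i x_j mod 4.  Hence
   sum_i phi_a(c_i) = 1/2 tr(a^2 sum_(i<j) c_i c_j), and as squaring is onto F,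
   isotropy amounts to sum_(i<j) c_i c_j = 0. *)

From HB Require Import structures.
From mathcomp Require Import all_boot all_algebra all_field zify ring.
Set Implicit Arguments. Unset Strict Implicit. Unset Printing Implicit Defensive.
Import GRing.Theory.
Local Open Scope ring_scope.

Lemma sqrr_sum (R : comNzRingType) n (x : 'I_n -> R) :
  (\sum_(i < n) x i) ^+ 2 =
  \sum_(i < n) x i ^+ 2 + (\sum_(i < n) \sum_(j < n | (i < j)%N) x i * x j) *+ 2.
Proof.
rewrite expr2 big_distrlr /=.
have split_row i : \sum_(j < n) x i * x j =
   x i ^+ 2 + \sum_(j < n | (i < j)%N) x i * x j + \sum_(j < n | (j < i)%N) x i * x j.
  rewrite (bigD1 i) //= -expr2 -addrA (bigID (fun j : 'I_n => (i < j)%N)) /=.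
  by congr (_ + (_ + _)); apply: eq_bigl => j; rewrite neq_ltn; case: ltngtP.
under eq_bigr do rewrite split_row.
rewrite !big_split /= -addrA mulr2n; congr (_ + (_ + _)).
under eq_bigr do rewrite big_mkcond; rewrite exchange_big /=.
apply: eq_bigr => i _; rewrite [RHS]big_mkcond; apply: eq_bigr => j _.
by case: ifP => //; rewrite mulrC.
Qed.

Section Interpolation.
Variables (K : fieldType) (n : nat) (r : 'I_n -> K).
Hypothesis r_inj : injective r.

Lemma small_poly_roots_eq0 (R : {poly K}) :
  (size R <= n)%N -> (forall l, R.[r l] = 0) -> R = 0.
Proof.
move=> sR R_r; apply/eqP; apply: contraT => R_neq0.
have R_roots : all (root R) [seq r l | l <- enum 'I_n].
  by apply/allP => x /mapP [l _ ->]; apply/rootP.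
have := max_poly_roots R_neq0 R_roots.
by rewrite map_inj_uniq // enum_uniq size_map -cardE card_ord ltnNge sR => /(_ isT).
Qed.

Definition lagrange_poly (l : 'I_n) : {poly K} :=
  let L := \prod_(m < n | m != l) ('X - (r m)%:P) in L.[r l]^-1 *: L.

Lemma lagrange_poly_sample l m : (lagrange_poly l).[r m] = (l == m)%:R.
Proof.
rewrite /lagrange_poly hornerZ !horner_prod; have [<-|lm] := eqVneq l m; last first.
  apply/eqP; rewrite mulf_eq0 prodf_seq_eq0; apply/orP; right; apply/hasP.
  by exists m; rewrite ?mem_index_enum // eq_sym lm !hornerE subrr.
rewrite mulVf //; apply/prodf_neq0 => k kl.
by rewrite !hornerE subr_eq0 (inj_eq r_inj) eq_sym.
Qed.

Lemma size_lagrange_poly l : (size (lagrange_poly l) <= n)%N.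
Proof.
rewrite (leq_trans (size_scale_leq _ _)) // (leq_trans (size_poly_prod_leq _ _)) //.
under eq_bigr do rewrite size_XsubC.
have := ltn_ord l; rewrite sum_nat_const (cardC1 l) card_ord; lia.
Qed.

Lemma lagrange_interp (R : {poly K}) :
  (size R <= n)%N -> R = \sum_(l < n) R.[r l] *: lagrange_poly l.
Proof.
move=> sR; apply/eqP; rewrite -subr_eq0; apply/eqP/small_poly_roots_eq0.
  rewrite (leq_trans (size_polyD _ _)) // size_polyN geq_max sR /=.
  apply: (big_ind (fun q : {poly K} => size q <= n)%N); rewrite ?size_poly0 //.
    by move=> a b ha hb; rewrite (leq_trans (size_polyD _ _)) // geq_max ha.
  by move=> l _; rewrite (leq_trans (size_scale_leq _ _)) ?size_lagrange_poly.
move=> m; rewrite hornerD hornerN horner_sum (bigD1 m) //= big1 ?addr0.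
  by rewrite hornerZ lagrange_poly_sample eqxx mulr1 subrr.
by move=> l lm; rewrite hornerZ lagrange_poly_sample (negPf lm) mulr0.
Qed.

(* The left-hand side is the trace of multiplication by [Y] on [K[X]/(Q)] in
   the monomial basis. *)
Lemma rmodp_trace_roots (Q Y : {poly K}) :
  Q \is monic -> size Q = n.+1 -> (forall l, root Q (r l)) ->
  \sum_(i < n) (Pdiv.Ring.rmodp (Y * 'X^i) Q)`_i = \sum_(l < n) Y.[r l].
Proof.
move=> Qmonic sQ Q_r.
have rmod_r i l : (Pdiv.Ring.rmodp (Y * 'X^i) Q).[r l] = Y.[r l] * r l ^+ i.
  have := congr1 (horner^~ (r l)) (Pdiv.RingMonic.rdivp_eq Qmonic (Y * 'X^i)).
  rewrite /= hornerD [X in _ = X + _]hornerM (rootP (Q_r l)) mulr0 add0r.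
  by rewrite hornerM hornerXn => <-.
have size_rmod i : (size (Pdiv.Ring.rmodp (Y * 'X^i) Q) <= n)%N.
  by rewrite -ltnS -sQ Pdiv.Ring.ltn_rmodpN0 ?monic_neq0.
transitivity (\sum_(i < n) \sum_(l < n) Y.[r l] * ((lagrange_poly l)`_i * r l ^+ i)).
  apply: eq_bigr => i _; rewrite {1}(lagrange_interp (size_rmod i)) coef_sum.
  by apply: eq_bigr => l _; rewrite coefZ rmod_r -mulrA (mulrC (r l ^+ i)).
rewrite exchange_big; apply: eq_bigr => l _; rewrite -mulr_sumr.
have := lagrange_poly_sample l l.
by rewrite eqxx (horner_coef_wide _ (size_lagrange_poly l)) => ->; rewrite mulr1.
Qed.

End Interpolation.

Section Char2Field.
Variables (f : nat) (F : finFieldType).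
Hypothesis cardF : #|F| = (2 ^ f)%N.

Lemma pchar_F : 2%N \in [pchar F].
Proof. exact: card_finPcharP cardF _. Qed.

Lemma f_gt0 : (0 < f)%N.
Proof. by have := card_finNzRing_gt1 F; rewrite cardF lt0n; apply: contraTneq => ->. Qed.

Lemma natr_mod4 n : ((n %% 4)%:R : F) = n%:R.
Proof.
by rewrite -(GRing.natr_mod_pchar pchar_F) modn_dvdm // (GRing.natr_mod_pchar pchar_F).
Qed.

Lemma toR_is_nmod_morphism : nmod_morphism (toR F).
Proof. by split=> // a b; rewrite /toR /= natr_mod4 natrD. Qed.

Lemma toR_is_monoid_morphism : monoid_morphism (toR F).
Proof. by split=> // a b; rewrite /toR /= natr_mod4 natrM. Qed.

HB.instance Definition _ :=
  GRing.isNmodMorphism.Build _ _ (toR F) toR_is_nmod_morphism.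
HB.instance Definition _ :=
  GRing.isMonoidMorphism.Build _ _ (toR F) toR_is_monoid_morphism.

Lemma toR_eq0 (z : 'Z_4) : (toR F z == 0) = (z *+ 2 == 0).
Proof.
have two0 : (2%:R : F) = 0 := pcharf0 pchar_F.
case: z => [[|[|[|[|//]]]] ?]; rewrite /toR -val_eqE /=.
- by rewrite eqxx.
- by rewrite oner_eq0.
- by rewrite two0 eqxx.
- by rewrite (natrD F 1 2) two0 addr0 oner_eq0.
Qed.

Definition ofF2 (z : 'F_2) : F := (val z)%:R.

Lemma ofF2_is_nmod_morphism : nmod_morphism ofF2.
Proof. by split=> // a b; rewrite /ofF2 /= (GRing.natr_mod_pchar pchar_F) natrD. Qed.

Lemma ofF2_is_monoid_morphism : monoid_morphism ofF2.
Proof. by split=> // a b; rewrite /ofF2 /= (GRing.natr_mod_pchar pchar_F) natrM. Qed.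

HB.instance Definition _ :=
  GRing.isNmodMorphism.Build _ _ ofF2 ofF2_is_nmod_morphism.
HB.instance Definition _ :=
  GRing.isMonoidMorphism.Build _ _ ofF2 ofF2_is_monoid_morphism.

Lemma map_ofF2_toR (q : {poly 'Z_4}) :
  map_poly ofF2 (map_poly (toR 'F_2) q) = map_poly (toR F) q.
Proof.
apply/polyP => i; rewrite coef_map /= !coef_map_id0 // /ofF2 /toR.
by rewrite -[RHS](GRing.natr_mod_pchar pchar_F); congr _%:R; exact: val_Fp_nat.
Qed.

Definition frob k (x : F) : F := x ^+ (2 ^ k).

Lemma frob_is_nmod_morphism k : nmod_morphism (frob k).
Proof.
split=> [|x y]; first by rewrite /frob expr0n expn_eq0.
rewrite /frob exprDn_pchar // pnatX (eq_pnat _ (pcharf_eq pchar_F)).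
by rewrite pnat_id.
Qed.

Lemma frob_is_monoid_morphism k : monoid_morphism (frob k).
Proof. by split=> [|x y]; rewrite /frob ?expr1n ?exprMn. Qed.

HB.instance Definition _ k :=
  GRing.isNmodMorphism.Build _ _ (frob k) (frob_is_nmod_morphism k).
HB.instance Definition _ k :=
  GRing.isMonoidMorphism.Build _ _ (frob k) (frob_is_monoid_morphism k).

Lemma frobD k l x : frob k (frob l x) = frob (l + k) x.
Proof. by rewrite /frob -exprM -expnD. Qed.

Lemma frob_card x : frob f x = x.
Proof. by rewrite /frob -cardF expf_card. Qed.

Lemma frob_horner k (q : {poly 'Z_4}) x :
  frob k (map_poly (toR F) q).[x] = (map_poly (toR F) q).[frob k x].
Proof.
rewrite -horner_map -map_poly_comp; congr horner.
by apply: eq_map_poly => z /=; rewrite /toR rmorph_nat.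
Qed.

Lemma sqrf_surj x : exists a : F, a ^+ 2 = x.
Proof.
exists (frob f.-1 x); rewrite -[_ ^+ 2]/(frob 1 _) frobD addn1 prednK ?f_gt0 //.
exact: frob_card.
Qed.

Lemma card_lt_size_poly (Q : {poly F}) :
  Q != 0 -> (forall x, root Q x) -> (#|F| < size Q)%N.
Proof.
move=> Q_neq0 Q_roots; rewrite cardE.
by apply: max_poly_roots Q_neq0 _ (enum_uniq _); apply/allP => x _.
Qed.

Lemma frob_neq_id k : (0 < k < f)%N -> exists x, frob k x != x.
Proof.
move=> /andP [k_gt0 k_lt_f]; apply/existsP; apply: contraT; rewrite negb_exists.
move=> /forallP frob_id.
have size_XnX : size ('X^(2 ^ k) - 'X : {poly F}) = (2 ^ k).+1.
  rewrite size_addl ?size_polyXn // size_polyN size_polyX ltnS.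
  by rewrite -[X in (X < _)%N](expn0 2) ltn_exp2l.
have := @card_lt_size_poly ('X^(2 ^ k) - 'X).
rewrite -size_poly_eq0 size_XnX cardF ltnS leq_exp2l // leqNgt k_lt_f.
by apply=> // x; rewrite rootE !hornerE subr_eq0 (negPn (frob_id x)).
Qed.

Lemma abs_tr_is_nmod_morphism : nmod_morphism (@abs_tr f F).
Proof.
split=> [|x y]; first by rewrite /abs_tr big1 // => i _; exact: (rmorph0 (frob i)).
by rewrite /abs_tr -big_split; apply: eq_bigr => i _; exact: (rmorphD (frob i)).
Qed.

HB.instance Definition _ :=
  GRing.isNmodMorphism.Build _ _ (@abs_tr f F) abs_tr_is_nmod_morphism.

Lemma abs_tr_neq0 : exists x : F, abs_tr f x != 0.
Proof.
pose T : {poly F} := \sum_(i < f) 'X^(2 ^ i).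
have T_coef1 : T`_1 = 1.
  rewrite coef_sum (bigD1 (Ordinal f_gt0)) //= coefXn eqxx big1 ?addr0 // => i i_neq0.
  rewrite coefXn -[1%N](expn0 2) eqn_exp2l // -[0%N]/(val (Ordinal f_gt0)) val_eqE.
  by rewrite eq_sym (negPf i_neq0).
have size_T : (size T <= (2 ^ f.-1).+1)%N.
  apply: leq_trans (size_sum _ _ _) _; apply/bigmax_leqP => i _.
  by rewrite size_polyXn ltnS leq_exp2l // -ltnS prednK ?f_gt0.
apply/existsP; apply: contraT; rewrite negb_exists => /forallP abs_tr0.
have := @card_lt_size_poly T.
have -> : T != 0 by apply: contra_neq (oner_neq0 F) => T0; rewrite -T_coef1 T0 coef0.
have T_roots x : root T x.
  have := abs_tr0 x; rewrite negbK rootE horner_sum.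
  by under eq_bigr do rewrite hornerXn.
move=> /(_ isT T_roots) /leq_trans /(_ size_T); rewrite cardF -{1}(prednK f_gt0).
by rewrite expnS; have := expn_gt0 2 f.-1; lia.
Qed.

Lemma abs_tr_nondegenerate (y : F) : (forall x, abs_tr f (x * y) = 0) -> y = 0.
Proof.
move=> tr_y0; apply/eqP; apply: contraT => y_neq0.
by have [x] := abs_tr_neq0; rewrite -(divfK y_neq0 x) tr_y0 eqxx.
Qed.

Lemma beta_self_dualE N (C : {vspace 'rV[F]_N}) :
  beta_self_dual f C <->
  (forall x : 'rV[F]_N, x \in C <-> (forall c, c \in C -> \sum_(i < N) x 0 i * c 0 i = 0)).
Proof.
have orthoE (x : 'rV[F]_N) :
    (forall c, c \in C -> \sum_(i < N) abs_tr f (x 0 i * c 0 i) = 0) <->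
    (forall c, c \in C -> \sum_(i < N) x 0 i * c 0 i = 0).
  split=> x_orth c cC; last by rewrite -raddf_sum x_orth ?raddf0.
  apply: abs_tr_nondegenerate => l; rewrite -[RHS](x_orth (l *: c)) ?memvZ //.
  rewrite mulr_sumr raddf_sum; apply: eq_bigr => i _.
  by rewrite mxE mulrCA.
by split=> self_dual x; apply: iff_trans (self_dual x) _; [|apply: iff_sym]; exact: orthoE.
Qed.

Lemma self_orthogonal_sum_eq0 N (c : 'rV[F]_N) :
  \sum_(i < N) c 0 i * c 0 i = 0 -> \sum_(i < N) c 0 i = 0.
Proof.
move=> c_c; have /eqP : frob 1 (\sum_(i < N) c 0 i) = 0.
  by rewrite rmorph_sum -[RHS]c_c; apply: eq_bigr => i _.
by rewrite expf_eq0 => /andP [_ /eqP].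
Qed.

Section GaloisRing.
Variables (p : {poly 'Z_4}) (alpha : F).
Hypotheses (p_monic : p \is monic) (size_p : size p = f.+1)
  (p_irr : irreducible_poly (map_poly (toR 'F_2) p))
  (alpha_root : root (map_poly (toR F) p) alpha).

Local Notation P := (map_poly (toR F) p).

Lemma monic_P : P \is monic.
Proof. exact: monic_map. Qed.

Lemma size_P : size P = f.+1.
Proof. by rewrite size_map_poly_id0 ?size_p // (monicP p_monic) rmorph1 oner_neq0. Qed.

Lemma proj_is_nmod_morphism : nmod_morphism (proj alpha).
Proof. by split=> [|q r]; rewrite /proj ?rmorph0 ?horner0 // rmorphD hornerD. Qed.

Lemma proj_is_monoid_morphism : monoid_morphism (proj alpha).
Proof. by split=> [|q r]; rewrite /proj ?rmorph1 ?hornerC // rmorphM hornerM. Qed.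

HB.instance Definition _ :=
  GRing.isNmodMorphism.Build _ _ (proj alpha) proj_is_nmod_morphism.
HB.instance Definition _ :=
  GRing.isMonoidMorphism.Build _ _ (proj alpha) proj_is_monoid_morphism.

Lemma small_poly_alpha_eq0 (d : {poly 'F_2}) :
  (size d <= f)%N -> (map_poly ofF2 d).[alpha] = 0 -> d = 0.
Proof.
move=> size_d d_alpha; apply/eqP; apply: contraT => d_neq0.
set pF2 := map_poly (toR 'F_2) p.
have size_pF2 : size pF2 = f.+1.
  by rewrite size_map_poly_id0 ?size_p // (monicP p_monic).
have coprime_pd : coprimep pF2 d.
  have [gcd1|/eqp_dvdl gcdp] := irredp_XsubCP p_irr (dvdp_gcdl pF2 d).
    by rewrite -gcdp_eqp1.
  have pF2_dvd_d : pF2 %| d by rewrite -gcdp dvdp_gcdr.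
  by have := dvdp_leq d_neq0 pF2_dvd_d; rewrite size_pF2 ltnNge size_d.
have := @coprimep_root _ (map_poly ofF2 pF2) (map_poly ofF2 d) alpha.
by rewrite coprimep_map coprime_pd map_ofF2_toR d_alpha eqxx => /(_ isT alpha_root).
Qed.

(* F = F_2(alpha): evaluation at alpha is injective on F_2-polynomials of
   degree < f, and both sides have 2^f elements. *)
Lemma proj_surj x : exists q, proj alpha q = x.
Proof.
pose g (b : f.-tuple 'F_2) := (map_poly ofF2 (\poly_(i < f) b`_i)).[alpha].
have g_inj : injective g.
  move=> b b' /eqP; rewrite -subr_eq0 /g -hornerN -hornerD -rmorphB => /eqP g_bb'.
  have /eqP : \poly_(i < f) b`_i - \poly_(i < f) b'`_i = 0.
    apply: small_poly_alpha_eq0 g_bb'.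
    by rewrite (leq_trans (size_polyD _ _)) // size_polyN geq_max !size_poly.
  rewrite subr_eq0 => /eqP /polyP b_b'; apply: val_inj.
  apply: (@eq_from_nth _ 0); rewrite ?size_tuple // => i i_lt_f.
  by have := b_b' i; rewrite !coef_poly i_lt_f.
have card_le : (#|F| <= #|{: f.-tuple 'F_2}|)%N by rewrite card_tuple card_Fp ?cardF.
have /codomP [b ->] := inj_card_onto g_inj card_le x.
exists (\poly_(i < f) ((val b`_i)%:R : 'Z_4)); rewrite /proj /g; congr horner.
apply/polyP => i; rewrite !coef_map !coef_poly; case: ifP => //= _.
by rewrite /toR /ofF2 -[RHS]natr_mod4; congr _%:R; exact: val_Zp_nat.
Qed.

Lemma Z4_double_half (z : 'Z_4) : toR 'F_2 z = 0 -> z = ((val z)./2)%:R *+ 2.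
Proof. by case: z => [[|[|[|[|//]]]] ?] /= z0; apply: val_inj. Qed.

Lemma proj_eq0 (s : {poly 'Z_4}) : proj alpha s = 0 -> exists r t, s = r *+ 2 + t * p.
Proof.
move=> s0; have s_eq := Pdiv.RingMonic.rdivp_eq p_monic s.
set s' := Pdiv.Ring.rmodp s p in s_eq.
have size_s' : (size s' <= f)%N.
  by rewrite -ltnS -size_p Pdiv.Ring.ltn_rmodpN0 ?monic_neq0.
have s'F2_0 : map_poly (toR 'F_2) s' = 0.
  apply: small_poly_alpha_eq0; first exact: leq_trans (size_poly _ _) size_s'.
  move: s0; rewrite map_ofF2_toR s_eq /proj rmorphD rmorphM hornerD hornerM.
  by rewrite (rootP alpha_root) mulr0 add0r.
exists (\poly_(i < f) ((val s'`_i)./2)%:R), (Pdiv.Ring.rdivp s p).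
rewrite addrC {1}s_eq; congr (_ + _); apply/polyP => i.
rewrite coefMn coef_poly; case: ltnP => [_|f_le_i].
  by apply: Z4_double_half; move/polyP: s'F2_0 => /(_ i); rewrite coef_map_id0 // coef0.
by rewrite nth_default ?mul0rn // (leq_trans size_s').
Qed.

Lemma frob_fixes_alpha k : frob k alpha = alpha -> forall x, frob k x = x.
Proof. by move=> k_alpha x; have [q <-] := proj_surj x; rewrite /proj frob_horner k_alpha. Qed.

Lemma frob_alpha_inj : injective (fun i : 'I_f => frob i alpha).
Proof.
move=> i j; wlog i_le_j : i j / (i <= j)%N.
  by move=> wlog_ij; case: (leqP i j) => [/wlog_ij //|/ltnW /wlog_ij ji /esym /ji ->].
move=> /= frob_ij; apply/val_inj/eqP; rewrite eqn_leq i_le_j leqNgt; apply/negP => i_lt_j.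
have k_alpha : frob (i + (f - j)) alpha = alpha.
  by rewrite -frobD frob_ij frobD subnKC ?frob_card // ltnW.
have [|x] := frob_neq_id (k := i + (f - j)).
  by move: i_lt_j (ltn_ord j) => /= ? ?; lia.
by rewrite (frob_fixes_alpha k_alpha) eqxx.
Qed.

Lemma Tr4_is_nmod_morphism : nmod_morphism (Tr4 f p).
Proof.
split=> [|u v]; rewrite /Tr4.
  by rewrite big1 // => i _; rewrite mul0r Pdiv.Ring.rmod0p coef0.
by rewrite -big_split; apply: eq_bigr => i _; rewrite mulrDl Pdiv.RingMonic.rmodpD // coefD.
Qed.

HB.instance Definition _ :=
  GRing.isNmodMorphism.Build _ _ (Tr4 f p) Tr4_is_nmod_morphism.

Lemma Tr4_mulp u : Tr4 f p (u * p) = 0.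
Proof.
by rewrite /Tr4 big1 // => i _; rewrite mulrAC Pdiv.RingMonic.rmodp_mull // coef0.
Qed.

Lemma map_rmodp u :
  map_poly (toR F) (Pdiv.Ring.rmodp u p) = Pdiv.Ring.rmodp (map_poly (toR F) u) P.
Proof.
rewrite {2}(Pdiv.RingMonic.rdivp_eq p_monic u) rmorphD rmorphM.
rewrite Pdiv.RingMonic.rmodp_addl_mul_small ?monic_P // size_P -size_p.
exact: leq_ltn_trans (size_poly _ _) (Pdiv.Ring.ltn_rmodpN0 _ (monic_neq0 p_monic)).
Qed.

Lemma toR_Tr4 q : toR F (Tr4 f p q) = abs_tr f (proj alpha q).
Proof.
rewrite /Tr4 rmorph_sum.
transitivity (\sum_(i < f) (Pdiv.Ring.rmodp (map_poly (toR F) q * 'X^i) P)`_i).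
  by apply: eq_bigr => i _; rewrite -coef_map map_rmodp rmorphM /= map_polyXn.
rewrite (rmodp_trace_roots frob_alpha_inj _ monic_P size_P); last first.
  by move=> l; rewrite rootE -frob_horner (rootP alpha_root) rmorph0.
by apply: eq_bigr => l _; rewrite -frob_horner.
Qed.

Lemma sum_Tr4_sqr n (la : {poly 'Z_4}) (lc : 'I_n -> {poly 'Z_4}) :
  proj alpha (\sum_(i < n) lc i) = 0 ->
  \sum_(i < n) Tr4 f p (la ^+ 2 * lc i ^+ 2) =
  Tr4 f p (la ^+ 2 * \sum_(i < n) \sum_(j < n | (i < j)%N) lc i * lc j) *+ 2.
Proof.
move=> /proj_eq0 [r [t sum_lc]].
set E := \sum_(i < n) \sum_(j < n | (i < j)%N) lc i * lc j.
have four0 : 4%:R = 0 :> {poly 'Z_4} by rewrite -polyC_natr; apply/eqP; rewrite polyC_eq0.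
have sum_sqr : \sum_(i < n) lc i ^+ 2 = (\sum_(i < n) lc i) ^+ 2 - E *+ 2.
  by rewrite sqrr_sum addrK.
rewrite -raddf_sum -mulr_sumr sum_sqr sum_lc.
have -> : (r *+ 2 + t * p) ^+ 2 = t ^+ 2 * p * p + (r ^+ 2 + r * t * p) * 4%:R by ring.
rewrite four0 mulr0 addr0 mulrBr raddfB /= mulrA Tr4_mulp sub0r mulrnAr raddfMn /=.
by rewrite -mulr_natr -mulrN; congr (_ * _); apply: val_inj.
Qed.

Lemma isotropic_rowE N (c : 'rV[F]_N) : \sum_(i < N) c 0 i = 0 ->
  (forall (a : F) (la : {poly 'Z_4}), proj alpha la = a ->
    forall lc : 'I_N -> {poly 'Z_4}, (forall i, proj alpha (lc i) = c 0 i) ->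
      \sum_(i < N) Tr4 f p (la ^+ 2 * lc i ^+ 2) = 0) <->
  \sum_(i < N) \sum_(j < N | (i < j)%N) c 0 i * c 0 j = 0.
Proof.
move=> sum_c0; set e := \sum_(i < N) \sum_(j < N | (i < j)%N) c 0 i * c 0 j.
have Tr4_sqr_eq0 a la lc : proj alpha la = a -> (forall i, proj alpha (lc i) = c 0 i) ->
    (\sum_(i < N) Tr4 f p (la ^+ 2 * lc i ^+ 2) == 0) = (abs_tr f (a ^+ 2 * e) == 0).
  move=> la_a lc_c; rewrite sum_Tr4_sqr; last first.
    by rewrite rmorph_sum -[RHS]sum_c0; apply: eq_bigr => i _; exact: lc_c.
  rewrite -toR_eq0 toR_Tr4 rmorphM rmorphXn /= la_a rmorph_sum /e.
  congr (abs_tr f (_ * _) == 0); apply: eq_bigr => i _.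
  by rewrite rmorph_sum; apply: eq_bigr => j _; rewrite rmorphM /= !lc_c.
split=> [isotropic | e0 a la la_a lc lc_c]; last first.
  by apply/eqP; rewrite (Tr4_sqr_eq0 a) // e0 mulr0 raddf0.
apply: abs_tr_nondegenerate => l; have [a <-] := sqrf_surj l.
have [la la_a] := proj_surj a.
have [lc lc_c] := fin_all_exists (fun i => proj_surj (c 0 i)).
by apply/eqP; rewrite -(Tr4_sqr_eq0 a la lc) // (isotropic a la la_a lc lc_c).
Qed.

Lemma phi_isotropicE N (C : {vspace 'rV[F]_N}) :
  (forall c, c \in C -> \sum_(i < N) c 0 i = 0) ->
  phi_isotropic f p alpha C <->
  (forall c, c \in C -> \sum_(i < N) \sum_(j < N | (i < j)%N) c 0 i * c 0 j = 0).
Proof.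
by move=> sum_C0; split=> isotropic c cC; have := isotropic c cC; rewrite isotropic_rowE ?sum_C0.
Qed.

End GaloisRing.

End Char2Field.

Theorem mainTheorem4 (f N : nat) (F : finFieldType) (hF : #|F| = (2 ^ f)%N)
  (p : {poly 'Z_4}) (hp_monic : p \is monic) (hp_size : size p = f.+1)
  (hp_irr : irreducible_poly (map_poly (@toR 'F_2) p))
  (alpha : F) (halpha : root (map_poly (@toR F) p) alpha)
  (C : {vspace 'rV[F]_N}) :
  @type_rho f N F p alpha C <-> gen_doubly_even_self_dual C.
Proof.
have isotropicE := phi_isotropicE hF hp_monic hp_size hp_irr halpha (C := C).
split=> [[/(beta_self_dualE hF) self_dual isotropic] | [self_dual doubly_even]].
  have sum_C0 c : c \in C -> \sum_(i < N) c 0 i = 0.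
    by move=> cC; apply: (self_orthogonal_sum_eq0 hF); apply: (self_dual c).1.
  have pairs_C0 := (isotropicE sum_C0).1 isotropic.
  by split=> // c cC; split; [exact: sum_C0 | exact: pairs_C0].
split; first exact/(beta_self_dualE hF).
have sum_C0 c (cC : c \in C) := (doubly_even c cC).1.
by apply/(isotropicE sum_C0) => c cC; exact: (doubly_even c cC).2.
Qed.
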